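(* Let $\mathcal{S}$ be a sound and refutationally complete saturation system and let $\theta(x,y)$ be the formula $y+x=x\to y=0$. Then $\mathcal{S}+\mathrm{IND}^R_{\mathrm{PF}}(\mathrm{Open}(\mathcal{T}))$ refutes the clause set $\mathit{CNF}(\mathit{sk}^\exists(\mathcal{T}+\neg\forall x\,\theta(x,x)))$.
   Context: Linear arithmetic: language $\{0/0,s/1,p/1,+/2\}$; $\mathcal{T}$ is the theory with axioms (universally closed) $0\neq s(x)$, $p(0)=0$, $p(s(x))=x$, $x+0=x$, $x+s(y)=s(x+y)$. $\mathrm{Open}(\mathcal{T})$ is the set of quantifier-free formulas of this language. $\mathit{sk}^\exists$ is existential Skolemization with canonical Skolem symbols (a strong quantifier $QxA$ with free variables $\vec y$ is replaced by the term $\mathfrak{s}_{QxA}(\vec y)$, a new function symbol indexed by $QxA$); $\mathit{CNF}$ gives the clause set of the conjunctive normal form of universal sentences. $I_x\varphi=\forall\vec z(\varphi(0,\vec z)\wedge\forall x(\varphi(x,\vec z)\to\varphi(s(x),\vec z))\to\forall x\varphi(x,\vec z))$. Saturation systems: sets of rules $\mathcal{C}/\mathcal{D}$ ($\mathcal{C}$ clause set, $\mathcal{D}$ finite clause set), $+$ = union; a deduction from $\mathcal{C}_0$ is $\mathcal{D}_0=\mathcal{C}_0,\dots,\mathcal{D}_n$ with $\mathcal{D}_{i+1}=\mathcal{D}_i\cup\mathcal{B}_i$ for a rule $\mathcal{D}_i/\mathcal{B}_i$; a refutation has the empty clause in $\mathcal{D}_n$. Sound: any clause $C$ derivable from $\mathcal{C}_0$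 has $L(C)\subseteq L(\mathcal{C}_0)$ and $\mathcal{C}_0\models C$; refutationally complete: every inconsistent clause set has a refutation. $\mathrm{IND}^R_{\mathrm{PF}}(\Gamma)$ is the set of rules $\mathcal{C}/\mathit{CNF}(\mathit{sk}^\exists(I_x\varphi(x,\vec t)))$ for every clause set $\mathcal{C}$, every $\varphi(x,\vec z)\in\Gamma$ and every vector $\vec t$ of ground terms over the symbols occurring in $\mathcal{C}$. *)

From Stdlib Require Import List Arith Bool.
Import ListNotations.

(* Function symbols: the four symbols of linear arithmetic, an unbounded supply
   of further (named) function symbols, and the canonical Skolem symbols
   s_{QxA}, indexed by the quantified formula QxA itself.  Variables are de Bruijn
   indices. *)
Inductive fsym : Type :=
| FZero | FSucc | FPred | FPlus
| FNamed (n : nat)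
| FSk (A : form)
with term : Type :=
| Var (n : nat)
| App (f : fsym) (args : list term)
with form : Type :=
| FFalse | FTrue
| FEq (t u : term)
| FPr (p : nat) (args : list term)
| FNot (A : form)
| FAnd (A B : form)
| FOr (A B : form)
| FImp (A B : form)
| FAll (A : form)
| FEx (A : form).

Fixpoint tsubst (sg : nat -> term) (t : term) : term :=
  match t with
  | Var n => sg n
  | App f ts => App f (map (tsubst sg) ts)
  end.

Definition scons (t : term) (sg : nat -> term) : nat -> term :=
  fun i => match i with 0 => t | S j => sg j end.

Definition tshift (t : term) : term := tsubst (fun i => Var (S i)) t.

Definition up (sg : nat -> term) : nat -> term :=
  scons (Var 0) (fun i => tshift (sg i)).

Fixpoint fsubst (sg : nat -> term) (A : form) : form :=
  match A with
  | FFalse => FFalse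
  | FTrue => FTrue
  | FEq t u => FEq (tsubst sg t) (tsubst sg u)
  | FPr p ts => FPr p (map (tsubst sg) ts)
  | FNot B => FNot (fsubst sg B)
  | FAnd B C => FAnd (fsubst sg B) (fsubst sg C)
  | FOr B C => FOr (fsubst sg B) (fsubst sg C)
  | FImp B C => FImp (fsubst sg B) (fsubst sg C)
  | FAll B => FAll (fsubst (up sg) B)
  | FEx B => FEx (fsubst (up sg) B)
  end.

Fixpoint tfree (i : nat) (t : term) : bool :=
  match t with
  | Var n => n =? i
  | App _ ts => existsb (tfree i) ts
  end.

Fixpoint ffree (i : nat) (A : form) : bool :=
  match A with
  | FFalse | FTrue => false
  | FEq t u => tfree i t || tfree i u
  | FPr _ ts => existsb (tfree i) ts
  | FNot B => ffree i B
  | FAnd B C | FOr B C | FImp B C => ffree i B || ffree i C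
  | FAll B | FEx B => ffree (S i) B
  end.

Fixpoint tbound (t : term) : nat :=
  match t with
  | Var n => S n
  | App _ ts => fold_right (fun u m => Nat.max (tbound u) m) 0 ts
  end.

Fixpoint fbound (A : form) : nat :=
  match A with
  | FFalse | FTrue => 0
  | FEq t u => Nat.max (tbound t) (tbound u)
  | FPr _ ts => fold_right (fun u m => Nat.max (tbound u) m) 0 ts
  | FNot B => fbound B
  | FAnd B C | FOr B C | FImp B C => Nat.max (fbound B) (fbound C)
  | FAll B | FEx B => Nat.pred (fbound B)
  end.

Definition fv (A : form) : list nat := filter (fun i => ffree i A) (seq 0 (fbound A)).

Definition sk_term (QA : form) : term := App (FSk QA) (map Var (fv QA)).

(* [sk pos sg A]: Skolemize A, occurring with polarity [pos], under the
   substitution [sg] of the outer replacements already performed. *)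
Fixpoint sk (pos : bool) (sg : nat -> term) (A : form) : form :=
  match A with
  | FFalse => FFalse
  | FTrue => FTrue
  | FEq t u => FEq (tsubst sg t) (tsubst sg u)
  | FPr p ts => FPr p (map (tsubst sg) ts)
  | FNot B => FNot (sk (negb pos) sg B)
  | FAnd B C => FAnd (sk pos sg B) (sk pos sg C)
  | FOr B C => FOr (sk pos sg B) (sk pos sg C)
  | FImp B C => FImp (sk (negb pos) sg B) (sk pos sg C)
  | FAll B => if pos then FAll (sk pos (up sg) B)
              else sk pos (scons (sk_term (fsubst sg A)) sg) B
  | FEx B => if pos then sk pos (scons (sk_term (fsubst sg A)) sg) B
             else FEx (sk pos (up sg) B)
  end.

Definition skE (A : form) : form := sk true Var A.

Inductive atom : Type :=
| AEq (t u : term)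
| APr (p : nat) (args : list term).

Definition literal : Type := (bool * atom)%type.   (* true = positive *)
Definition clause : Type := list literal.
Definition clause_set : Type := clause -> Prop.

Inductive nform : Type :=
| NTop | NBot
| NLit (b : bool) (a : atom)
| NAnd (A B : nform)
| NOr (A B : nform)
| NAll (A : nform).

(* NNF of a formula whose quantifiers are all universal in effect
   (positive ∀, negative ∃), as is the case for the output of sk^∃.
   The two other quantifier cases never arise for such formulas. *)
Fixpoint nnf (pos : bool) (A : form) : nform :=
  match A with
  | FFalse => if pos then NBot else NTop
  | FTrue => if pos then NTop else NBot
  | FEq t u => NLit pos (AEq t u)
  | FPr p ts => NLit pos (APr p ts)
  | FNot B => nnf (negb pos) B
  | FAnd B C => if pos then NAnd (nnf pos B) (nnf pos C) else NOr (nnf pos B) (nnf pos C)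
  | FOr B C => if pos then NOr (nnf pos B) (nnf pos C) else NAnd (nnf pos B) (nnf pos C)
  | FImp B C => if pos then NOr (nnf false B) (nnf true C)
                else NAnd (nnf true B) (nnf false C)
  | FAll B => NAll (nnf pos B)
  | FEx B => NAll (nnf pos B)
  end.

Definition aren (xi : nat -> nat) (a : atom) : atom :=
  match a with
  | AEq t u => AEq (tsubst (fun i => Var (xi i)) t) (tsubst (fun i => Var (xi i)) u)
  | APr p ts => APr p (map (tsubst (fun i => Var (xi i))) ts)
  end.

Definition uplift (xi : nat -> nat) : nat -> nat :=
  fun i => match i with 0 => 0 | S j => S (xi j) end.

Fixpoint nren (xi : nat -> nat) (A : nform) : nform :=
  match A with
  | NTop => NTop
  | NBot => NBot
  | NLit b a => NLit b (aren xi a)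
  | NAnd B C => NAnd (nren xi B) (nren xi C)
  | NOr B C => NOr (nren xi B) (nren xi C)
  | NAll B => NAll (nren (uplift xi) B)
  end.

(* prenexing of a universal NNF: [pnf A = (k, M)] means A ≡ ∀^k M *)
Fixpoint pnf (A : nform) : nat * nform :=
  match A with
  | NAll B => let (k, M) := pnf B in (S k, M)
  | NAnd B C =>
      let (k1, M1) := pnf B in let (k2, M2) := pnf C in
      (k1 + k2, NAnd (nren (fun i => i + k2) M1)
                     (nren (fun i => if i <? k2 then i else i + k1) M2))
  | NOr B C =>
      let (k1, M1) := pnf B in let (k2, M2) := pnf C in
      (k1 + k2, NOr (nren (fun i => i + k2) M1)
                    (nren (fun i => if i <? k2 then i else i + k1) M2))
  | _ => (0, A)
  end.

Fixpoint cnf_mat (M : nform) : list clause :=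
  match M with
  | NTop => []
  | NBot => [[]]
  | NLit b a => [[(b, a)]]
  | NAnd A B => cnf_mat A ++ cnf_mat B
  | NOr A B => flat_map (fun c1 => map (fun c2 => c1 ++ c2) (cnf_mat B)) (cnf_mat A)
  | NAll A => cnf_mat A
  end.

(* clause set of the CNF of a universal sentence; the variables of the
   clauses are (implicitly universally quantified) free variables *)
Definition CNF (A : form) : list clause := cnf_mat (snd (pnf (nnf true A))).

Definition CNF_sk_set (G : form -> Prop) : clause_set :=
  fun c => exists A, G A /\ In c (CNF (skE A)).

Record structure : Type := {
  dom : Type;
  dom_inh : dom;
  fint : fsym -> list dom -> dom;
  pint : nat -> list dom -> Prop }.

Fixpoint teval (M : structure) (rho : nat -> dom M) (t : term) : dom M :=
  match t with
  | Var n => rho n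
  | App f ts => fint M f (map (teval M rho) ts)
  end.

Definition aeval (M : structure) (rho : nat -> dom M) (a : atom) : Prop :=
  match a with
  | AEq t u => teval M rho t = teval M rho u
  | APr p ts => pint M p (map (teval M rho) ts)
  end.

Definition lit_sat (M : structure) (rho : nat -> dom M) (l : literal) : Prop :=
  if fst l then aeval M rho (snd l) else ~ aeval M rho (snd l).

Definition clause_sat (M : structure) (rho : nat -> dom M) (c : clause) : Prop :=
  exists l, In l c /\ lit_sat M rho l.

Definition models (M : structure) (C : clause_set) : Prop :=
  forall c, C c -> forall rho : nat -> dom M, clause_sat M rho c.

Definition inconsistent (C : clause_set) : Prop := forall M, ~ models M C.

Definition entails (C0 : clause_set) (c : clause) : Prop :=
  forall M, models M C0 -> forall rho : nat -> dom M, clause_sat M rho c.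

Inductive symbol : Type := SFun (f : fsym) | SPred (p : nat).

Fixpoint sym_in_term (s : symbol) (t : term) : Prop :=
  match t with
  | Var _ => False
  | App f ts => s = SFun f \/
      (fix go (l : list term) : Prop :=
         match l with [] => False | u :: l' => sym_in_term s u \/ go l' end) ts
  end.

Definition sym_in_atom (s : symbol) (a : atom) : Prop :=
  match a with
  | AEq t u => sym_in_term s t \/ sym_in_term s u
  | APr p ts => s = SPred p \/ exists t, In t ts /\ sym_in_term s t
  end.

Definition sym_in_clause (s : symbol) (c : clause) : Prop :=
  exists l, In l c /\ sym_in_atom s (snd l).

Definition sym_in_set (s : symbol) (C : clause_set) : Prop :=
  exists c, C c /\ sym_in_clause s c.

Definition lang_sub (c : clause) (C0 : clause_set) : Prop :=
  forall s, sym_in_clause s c -> sym_in_set s C0.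

(* a set of rules C / D, with C a clause set and D a finite clause set *)
Definition sat_system : Type := clause_set -> list clause -> Prop.

Definition sys_plus (S1 S2 : sat_system) : sat_system :=
  fun C D => S1 C D \/ S2 C D.

Inductive deduction (S : sat_system) (C0 : clause_set) : clause_set -> Prop :=
| ded_base : deduction S C0 C0
| ded_step (D : clause_set) (B : list clause) :
    deduction S C0 D -> S D B -> deduction S C0 (fun c => D c \/ In c B).

Definition derivable (S : sat_system) (C0 : clause_set) (c : clause) : Prop :=
  exists D, deduction S C0 D /\ D c.

Definition refutes (S : sat_system) (C0 : clause_set) : Prop :=
  exists D, deduction S C0 D /\ D [].

Definition sound (S : sat_system) : Prop :=
  forall C0 c, derivable S C0 c -> lang_sub c C0 /\ entails C0 c.

Definition refut_complete (S : sat_system) : Prop :=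
  forall C, inconsistent C -> refutes S C.

Definition tzero : term := App FZero [].
Definition tsucc (t : term) : term := App FSucc [t].
Definition tpred (t : term) : term := App FPred [t].
Definition tplus (t u : term) : term := App FPlus [t; u].

Definition T_axioms : list form :=
  [ FAll (FNot (FEq tzero (tsucc (Var 0))));
    FEq (tpred tzero) tzero;
    FAll (FEq (tpred (tsucc (Var 0))) (Var 0));
    FAll (FEq (tplus (Var 0) tzero) (Var 0));
    FAll (FAll (FEq (tplus (Var 1) (tsucc (Var 0)))
                    (tsucc (tplus (Var 1) (Var 0))))) ].

Fixpoint LA_term (t : term) : Prop :=
  match t with
  | Var _ => True
  | App FZero [] => True
  | App FSucc [a] => LA_term a
  | App FPred [a] => LA_term a
  | App FPlus [a; b] => LA_term a /\ LA_term b
  | _ => False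
  end.

Fixpoint Open_T (A : form) : Prop :=
  match A with
  | FFalse | FTrue => True
  | FEq t u => LA_term t /\ LA_term u
  | FPr _ _ => False
  | FNot B => Open_T B
  | FAnd B C | FOr B C | FImp B C => Open_T B /\ Open_T C
  | FAll _ | FEx _ => False
  end.

(* I_x psi for a formula psi(x) whose only free variable is x = Var 0:
   psi(0) ∧ ∀x (psi(x) → psi(s x)) → ∀x psi(x)   (no parameters z left) *)
Definition ind_x (psi : form) : form :=
  FImp (FAnd (fsubst (scons tzero Var) psi)
             (FAll (FImp psi (fsubst (scons (tsucc (Var 0)) (fun i => Var (S i))) psi))))
       (FAll psi).

(* phi(x, t1..tk): x = Var 0, parameters z_j = Var (j+1) replaced by t_j *)
Definition inst_params (phi : form) (ts : list term) : form :=
  fsubst (scons (Var 0) (fun j => nth j ts (Var (S j)))) phi.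

Definition ground_over (C : clause_set) (t : term) : Prop :=
  (forall i, tfree i t = false) /\ (forall s, sym_in_term s t -> sym_in_set s C).

Definition IND_R_PF (G : form -> Prop) : sat_system :=
  fun C D => exists (phi : form) (ts : list term),
      G phi /\
      (forall i, ffree i phi = true -> i <= length ts) /\
      Forall (ground_over C) ts /\
      D = CNF (skE (ind_x (inst_params phi ts))).

(* theta(x, y) := y + x = x -> y = 0, with x = Var 0, y = Var 1 *)
Definition theta : form :=
  FImp (FEq (tplus (Var 1) (Var 0)) (Var 0)) (FEq (Var 1) tzero).

Definition all_theta_xx : form := FAll (fsubst (scons (Var 0) (scons (Var 0) Var)) theta).

Definition T_neg_theta : form -> Prop :=
  fun A => In A T_axioms \/ A = FNot all_theta_xx.

(* Skolemizing ¬∀x θ(x,x) yields a constant c with c + c = c and c ≠ 0.  A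
   single induction rule on the open formula θ(x, c) adds the clauses of
   I_x θ(x, c), with a Skolem constant d for the premise ∀x (θ(x,c) → θ(s x,c)).
   Over T the base θ(0, c) holds because c + 0 = c, and the step θ(d, c) →
   θ(s d, c) holds because c + s d = s (c + d) and p is a left inverse of s;
   so the clauses force θ(c, c), contradicting the Skolem axioms of c.  The
   enlarged clause set is therefore inconsistent, S refutes it by refutational
   completeness, and prefixing the induction step gives the refutation. *)

From Stdlib Require Import List.
Import ListNotations.

Lemma deduction_prepend_rule (S S' : sat_system) (C0 : clause_set) (B : list clause)
    (D : clause_set) :
  (forall C B', S C B' -> S' C B') -> S' C0 B ->
  deduction S (fun c => C0 c \/ In c B) D -> deduction S' C0 D.
Proof.
  intros Hsub Hrule Hded.
  induction Hded as [|D B' _ IH HS].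
  - exact (ded_step S' C0 C0 B (ded_base S' C0) Hrule).
  - exact (ded_step S' C0 D B' IH (Hsub D B' HS)).
Qed.

Lemma refutes_after_rule (S S' : sat_system) (C0 : clause_set) (B : list clause) :
  refut_complete S -> (forall C B', S C B' -> S' C B') -> S' C0 B ->
  inconsistent (fun c => C0 c \/ In c B) -> refutes S' C0.
Proof.
  intros Hcomplete Hsub Hrule Hincons.
  destruct (Hcomplete _ Hincons) as [D [Hded Hempty]].
  exists D. split; [exact (deduction_prepend_rule S S' C0 B D Hsub Hrule Hded) | exact Hempty].
Qed.

Lemma clause_sat_Exists (M : structure) (rho : nat -> dom M) (cl : clause) :
  clause_sat M rho cl <-> Exists (lit_sat M rho) cl.
Proof. symmetry. apply Exists_exists. Qed.

(* sk^∃ replaces the negative ∀x of ¬∀x θ(x,x) by the constant [theta_cex], and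
   the negative ∀x in the premise of I_x θ(x, theta_cex) by [step_cex]. *)
Definition theta_cex : term := sk_term all_theta_xx.

Definition theta_at_cex : form := inst_params theta [theta_cex].

Definition step_cex : term :=
  sk_term (FAll (FImp theta_at_cex
                      (fsubst (scons (tsucc (Var 0)) (fun i => Var (S i))) theta_at_cex))).

Lemma CNF_neg_all_theta :
  CNF (skE (FNot all_theta_xx)) =
  [[(true, AEq (tplus theta_cex theta_cex) theta_cex)]; [(false, AEq theta_cex tzero)]].
Proof. vm_compute. reflexivity. Qed.

Definition neg_base_at_cex : list literal :=
  [(true, AEq (tplus theta_cex tzero) tzero); (false, AEq theta_cex tzero)].

Definition neg_step_at_cex : list clause :=
  [[(false, AEq (tplus theta_cex step_cex) step_cex); (true, AEq theta_cex tzero)];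
   [(true, AEq (tplus theta_cex (tsucc step_cex)) (tsucc step_cex))];
   [(false, AEq theta_cex tzero)]].

Definition theta_clause_at_cex : clause :=
  [(false, AEq (tplus theta_cex (Var 0)) (Var 0)); (true, AEq theta_cex tzero)].

(* The distribution of ¬θ(0,c) ∨ ¬(θ(d,c) → θ(s d,c)) ∨ θ(x,c) into clauses. *)
Definition ind_theta_clauses : list clause :=
  flat_map (fun l => map (fun s => l :: s ++ theta_clause_at_cex) neg_step_at_cex)
           neg_base_at_cex.

Lemma CNF_ind_theta : CNF (skE (ind_x theta_at_cex)) = ind_theta_clauses.
Proof. vm_compute. reflexivity. Qed.

Lemma in_ind_theta_clauses (l : literal) (s : clause) :
  In l neg_base_at_cex -> In s neg_step_at_cex ->
  In (l :: s ++ theta_clause_at_cex) ind_theta_clauses.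
Proof.
  intros Hl Hs. apply in_flat_map. exists l. split; [exact Hl |].
  exact (in_map (fun s => l :: s ++ theta_clause_at_cex) _ _ Hs).
Qed.

Lemma theta_cex_ground : ground_over (CNF_sk_set T_neg_theta) theta_cex.
Proof.
  split; [reflexivity |].
  intros s [Hs | []].
  exists [(false, AEq theta_cex tzero)]. split.
  - exists (FNot all_theta_xx). split; [right; reflexivity |].
    rewrite CNF_neg_all_theta. right. left. reflexivity.
  - exists (false, AEq theta_cex tzero). split; [left; reflexivity |].
    left. left. exact Hs.
Qed.

Lemma ind_theta_rule :
  IND_R_PF Open_T (CNF_sk_set T_neg_theta) ind_theta_clauses.
Proof.
  exists theta, [theta_cex]. split; [simpl; tauto |]. split.
  - intros [|[|i]]; simpl; auto. discriminate.
  - split; [exact (Forall_cons _ theta_cex_ground (Forall_nil _)) |].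
    symmetry. exact CNF_ind_theta.
Qed.

Section Model.

Variable M : structure.
Hypothesis HM : models M (CNF_sk_set T_neg_theta).

Lemma model_unit_clause (A : form) (l : literal) (rho : nat -> dom M) :
  T_neg_theta A -> In [l] (CNF (skE A)) -> lit_sat M rho l.
Proof.
  intros HA Hl.
  destruct (HM [l] (ex_intro _ A (conj HA Hl)) rho) as [l' [[<- | []] Hsat]].
  exact Hsat.
Qed.

Lemma model_pred_succ (rho : nat -> dom M) (t : term) :
  teval M rho (tpred (tsucc t)) = teval M rho t.
Proof.
  apply (model_unit_clause (FAll (FEq (tpred (tsucc (Var 0))) (Var 0)))
           (true, AEq (tpred (tsucc (Var 0))) (Var 0)) (fun _ => teval M rho t)).
  - left. simpl. tauto.
  - vm_compute. tauto.
Qed.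

Lemma model_plus_zero (rho : nat -> dom M) (t : term) :
  teval M rho (tplus t tzero) = teval M rho t.
Proof.
  apply (model_unit_clause (FAll (FEq (tplus (Var 0) tzero) (Var 0)))
           (true, AEq (tplus (Var 0) tzero) (Var 0)) (fun _ => teval M rho t)).
  - left. simpl. tauto.
  - vm_compute. tauto.
Qed.

Lemma model_plus_succ (rho : nat -> dom M) (t u : term) :
  teval M rho (tplus t (tsucc u)) = teval M rho (tsucc (tplus t u)).
Proof.
  apply (model_unit_clause
           (FAll (FAll (FEq (tplus (Var 1) (tsucc (Var 0))) (tsucc (tplus (Var 1) (Var 0))))))
           (true, AEq (tplus (Var 1) (tsucc (Var 0))) (tsucc (tplus (Var 1) (Var 0))))
           (fun i => match i with 0 => teval M rho u | _ => teval M rho t end)).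
  - left. simpl. tauto.
  - vm_compute. tauto.
Qed.

Lemma model_plus_succ_fixed (rho : nat -> dom M) (t u : term) :
  teval M rho (tplus t (tsucc u)) = teval M rho (tsucc u) ->
  teval M rho (tplus t u) = teval M rho u.
Proof.
  intros H.
  rewrite <- (model_pred_succ rho (tplus t u)), <- (model_pred_succ rho u).
  change (fint M FPred [teval M rho (tsucc (tplus t u))] =
          fint M FPred [teval M rho (tsucc u)]).
  rewrite <- model_plus_succ, H. reflexivity.
Qed.

Lemma model_theta_cex_idem (rho : nat -> dom M) :
  teval M rho (tplus theta_cex theta_cex) = teval M rho theta_cex.
Proof.
  apply (model_unit_clause (FNot all_theta_xx)
           (true, AEq (tplus theta_cex theta_cex) theta_cex)).
  - right. reflexivity.
  - rewrite CNF_neg_all_theta. left. reflexivity.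
Qed.

Lemma model_theta_cex_nonzero (rho : nat -> dom M) :
  teval M rho theta_cex <> teval M rho tzero.
Proof.
  apply (model_unit_clause (FNot all_theta_xx) (false, AEq theta_cex tzero)).
  - right. reflexivity.
  - rewrite CNF_neg_all_theta. right. left. reflexivity.
Qed.

Lemma ind_theta_clauses_unsat :
  ~ (forall cl, In cl ind_theta_clauses -> forall rho, clause_sat M rho cl).
Proof.
  intros Hind.
  set (rho := fun _ : nat => teval M (fun _ => dom_inh M) theta_cex).
  assert (Hnonzero := model_theta_cex_nonzero rho).
  assert (Hneg_step : forall s, In s neg_step_at_cex -> Exists (lit_sat M rho) s).
  { intros s Hs.
    assert (Hcl := Hind _ (in_ind_theta_clauses _ s (or_introl eq_refl) Hs) rho).
    rewrite clause_sat_Exists, Exists_cons, Exists_app in Hcl.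
    destruct Hcl as [Hbase | [Hstep | Hconcl]]; [| exact Hstep |].
    - cbn [lit_sat fst snd aeval] in Hbase. rewrite (model_plus_zero rho theta_cex) in Hbase. contradiction.
    - unfold theta_clause_at_cex in Hconcl. rewrite !Exists_cons, Exists_nil in Hconcl.
      cbn [lit_sat fst snd aeval] in Hconcl. destruct Hconcl as [Hne | [Hzero | []]].
      + destruct (Hne (model_theta_cex_idem rho)).
      + contradiction. }
  assert (Hsucc := Hneg_step _ (or_intror (or_introl eq_refl))).
  assert (Himpl := Hneg_step _ (or_introl eq_refl)).
  rewrite !Exists_cons, Exists_nil in Hsucc. rewrite !Exists_cons, Exists_nil in Himpl. cbn [lit_sat fst snd aeval] in Hsucc, Himpl.
  destruct Hsucc as [Hsucc | []].
  destruct Himpl as [Hne | [Hzero | []]]; [| contradiction].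
  exact (Hne (model_plus_succ_fixed rho theta_cex step_cex Hsucc)).
Qed.

End Model.

Lemma T_ind_theta_inconsistent :
  inconsistent (fun c => CNF_sk_set T_neg_theta c \/ In c ind_theta_clauses).
Proof.
  intros M HM.
  apply (ind_theta_clauses_unsat M).
  - intros c Hc. exact (HM c (or_introl Hc)).
  - intros c Hc. exact (HM c (or_intror Hc)).
Qed.

Theorem lemma9 (S : sat_system) :
  sound S -> refut_complete S ->
  refutes (sys_plus S (IND_R_PF Open_T)) (CNF_sk_set T_neg_theta).
Proof.
  intros _ Hcomplete.
  apply (refutes_after_rule S _ _ ind_theta_clauses Hcomplete).
  - intros C B HS. left. exact HS.
  - right. exact ind_theta_rule.
  - exact T_ind_theta_inconsistent.
Qed.
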